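(* Let $D\subseteq\mathbb{R}^3\setminus\{0\}$ be open, $\Omega=\mathbb{R}^3\times D$, and $\vec\mu(\vec M,\vec\gamma)=(0,0,\mu_3(\vec\gamma,\vec M\cdot\vec\gamma))$ with $\mu_3:D\times\mathbb{R}\to\mathbb{R}$ smooth. Then $\Pi_{\vec\mu}$ defines a Poisson bracket on $\Omega$ if and only if $\gamma_1\frac{\partial\mu_3}{\partial\gamma_2}-\gamma_2\frac{\partial\mu_3}{\partial\gamma_1}=0$ on $D\times\mathbb{R}$ (derivatives with $s=\vec M\cdot\vec\gamma$ held fixed). Moreover, if $\mu_3=\beta(\gamma_3)\delta(s)$ with $\beta$, $\delta$ smooth and $\delta$ nowhere zero, then $\Pi_{\vec\mu}$ defines a Poisson bracket and $C=\Delta(\vec M\cdot\vec\gamma)+B(\gamma_3)$, where $\Delta'=1/\delta$ and $B'=\beta$, is a Casimir function of $\Pi_{\vec\mu}$.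
   Context: Coordinates on $\mathbb{R}^6$ are $(\vec M,\vec\gamma)=(M_1,M_2,M_3,\gamma_1,\gamma_2,\gamma_3)$. For a smooth $\vec\mu=(\mu_1,\mu_2,\mu_3)$ of $(\vec M,\vec\gamma)$, $\Pi_{\vec\mu}$ is the skew-symmetric $6\times6$ matrix $$\Pi_{\vec\mu}=\begin{bmatrix}0&-M_3-\mu_3&M_2+\mu_2&0&-\gamma_3&\gamma_2\\ M_3+\mu_3&0&-M_1-\mu_1&\gamma_3&0&-\gamma_1\\ -M_2-\mu_2&M_1+\mu_1&0&-\gamma_2&\gamma_1&0\\ 0&-\gamma_3&\gamma_2&0&0&0\\ \gamma_3&0&-\gamma_1&0&0&0\\ -\gamma_2&\gamma_1&0&0&0&0\end{bmatrix},$$ it ''defines a Poisson bracket'' if $\{f,g\}_{\vec\mu}=(\nabla f)^T\Pi_{\vec\mu}\nabla g$ satisfies the Jacobi identity, and a Casimir function is a smooth $C$ with $\Pi_{\vec\mu}\nabla C=0$. *)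

From Stdlib Require Import Reals ClassicalEpsilon.
Open Scope R_scope.

(** Points of R^n are modelled as [nat -> R]; only coordinates [i < n] matter. *)
Definition pt := nat -> R.

Fixpoint sumR (n : nat) (f : nat -> R) : R :=
  match n with O => 0 | S k => sumR k f + f k end.

Definition distn (n : nat) (x y : pt) : R := sumR n (fun i => Rabs (x i - y i)).

Definition is_open (n : nat) (U : pt -> Prop) : Prop :=
  forall x, U x -> exists e, 0 < e /\ forall y, distn n x y < e -> U y.

Definition cont_on (n : nat) (U : pt -> Prop) (f : pt -> R) : Prop :=
  forall x, U x -> forall eps, 0 < eps ->
    exists d, 0 < d /\ forall y, U y -> distn n x y < d -> Rabs (f y - f x) < eps.

Definition upd (x : pt) (i : nat) (t : R) : pt :=
  fun j => if Nat.eqb j i then t else x j.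

Definition partial_at (f : pt -> R) (i : nat) (x : pt) (l : R) : Prop :=
  derivable_pt_lim (fun t => f (upd x i t)) (x i) l.

(** The i-th partial derivative of f at x (meaningful when it exists,
    where it is unique). *)
Definition pd (f : pt -> R) (i : nat) (x : pt) : R :=
  epsilon (inhabits 0) (fun l => partial_at f i x l).

(** C^infinity on an open set U of R^n: there is a family of continuous
    functions F l (l = list of differentiation indices, most recent first)
    with F nil = f on U and d/dx_i (F l) = F (i :: l) on U. *)
Definition smooth_on (n : nat) (U : pt -> Prop) (f : pt -> R) : Prop :=
  exists F : list nat -> pt -> R,
    (forall x, U x -> F nil x = f x) /\
    (forall l, cont_on n U (F l)) /\
    (forall l i x, (i < n)%nat -> U x -> partial_at (F l) i x (F (cons i l) x)).

Definition smooth1 (f : R -> R) : Prop :=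
  exists F : nat -> R -> R,
    (forall x, F O x = f x) /\ (forall k x, derivable_pt_lim (F k) x (F (S k) x)).

Definition pbracket (n : nat) (Pi : nat -> nat -> pt -> R) (f g : pt -> R) (x : pt) : R :=
  sumR n (fun i => sumR n (fun j => pd f i x * Pi i j x * pd g j x)).

Definition defines_Poisson (n : nat) (U : pt -> Prop) (Pi : nat -> nat -> pt -> R) : Prop :=
  forall f g h, smooth_on n U f -> smooth_on n U g -> smooth_on n U h ->
    forall x, U x ->
      pbracket n Pi f (pbracket n Pi g h) x
      + pbracket n Pi g (pbracket n Pi h f) x
      + pbracket n Pi h (pbracket n Pi f g) x = 0.

Definition is_Casimir (n : nat) (U : pt -> Prop) (Pi : nat -> nat -> pt -> R) (C : pt -> R) : Prop :=
  smooth_on n U C /\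
  forall x, U x -> forall i, (i < n)%nat -> sumR n (fun j => Pi i j x * pd C j x) = 0.

(** Coordinates on R^6: x 0, x 1, x 2 = M1, M2, M3 ; x 3, x 4, x 5 = g1, g2, g3. *)
Definition PiMu (mu1 mu2 mu3 : pt -> R) (i j : nat) (x : pt) : R :=
  let M1 := x 0%nat in let M2 := x 1%nat in let M3 := x 2%nat in
  let g1 := x 3%nat in let g2 := x 4%nat in let g3 := x 5%nat in
  match i, j with
  | 0%nat, 1%nat => - (M3 + mu3 x) | 0%nat, 2%nat => M2 + mu2 x | 0%nat, 4%nat => - g3 | 0%nat, 5%nat => g2
  | 1%nat, 0%nat => M3 + mu3 x | 1%nat, 2%nat => - (M1 + mu1 x) | 1%nat, 3%nat => g3 | 1%nat, 5%nat => - g1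
  | 2%nat, 0%nat => - (M2 + mu2 x) | 2%nat, 1%nat => M1 + mu1 x | 2%nat, 3%nat => - g2 | 2%nat, 4%nat => g1
  | 3%nat, 1%nat => - g3 | 3%nat, 2%nat => g2
  | 4%nat, 0%nat => g3 | 4%nat, 2%nat => - g1
  | 5%nat, 0%nat => - g2 | 5%nat, 1%nat => g1
  | _, _ => 0
  end.

Definition restr (k : nat) (p : pt) : pt := fun j => if Nat.ltb j k then p j else 0.

(** Omega = R^3 x D inside R^6 (gamma = coordinates 3,4,5). *)
Definition Omega (D : pt -> Prop) : pt -> Prop :=
  fun x => D (restr 3 (fun k => x (3 + k)%nat)).

(** D x R inside R^4, coordinates (g1, g2, g3, s). *)
Definition DxR (D : pt -> Prop) : pt -> Prop := fun p => D (restr 3 p).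

Definition Mdotg (x : pt) : R := x 0%nat * x 3%nat + x 1%nat * x 4%nat + x 2%nat * x 5%nat.

Definition gs (x : pt) : pt :=
  fun k => match k with
           | 0%nat => x 3%nat | 1%nat => x 4%nat | 2%nat => x 5%nat
           | 3%nat => Mdotg x | _ => 0
           end.

Definition PiMu3 (mu3 : pt -> R) : nat -> nat -> pt -> R :=
  PiMu (fun _ => 0) (fun _ => 0) (fun x => mu3 (gs x)).

From Stdlib Require Import Reals ClassicalEpsilon.
From Stdlib Require Import Lra Lia FunctionalExtensionality MVT.
Open Scope R_scope.

(* Write M = (x0,x1,x2), gamma = (x3,x4,x5) and s = M.gamma.  For smooth f, g, h the
   Leibniz rule splits the Jacobiator of Pi_mu into terms with second derivatives of
   f, g, h, which cancel in the cyclic sum because Hessians are symmetric (Schwarz),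
   and terms with first derivatives of the entries of Pi_mu.  These entries are affine
   in x except for mu3(gamma, s), whose gradient is given by the chain rule; the cyclic
   sum of the latter terms comes out as
     (gamma2 d_gamma1 mu3 - gamma1 d_gamma2 mu3) * det (d_M f, d_M g, d_M h).
   Hence the condition implies the Jacobi identity.  Conversely, take f, g, h = M1, M2,
   M3 at the point M = s gamma / |gamma|^2 (here gamma <> 0 is needed), for which
   M.gamma = s.  For mu3 = beta(gamma3) delta(s), which does not depend on gamma1 and
   gamma2, the condition is trivial, and
   Pi grad C = 0 is a direct computation since grad s = (gamma, M). *)

Lemma dlim_ext f g x l1 l2 : (forall t, f t = g t) -> l1 = l2 ->
  derivable_pt_lim f x l1 -> derivable_pt_lim g x l2.
Proof. intros Efg <- Df. eapply derivable_pt_lim_ext; eauto. Qed.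

Lemma dlim_val f x l1 l2 : l1 = l2 -> derivable_pt_lim f x l1 -> derivable_pt_lim f x l2.
Proof. now intros <-. Qed.

Lemma dlim_plus f g x l1 l2 : derivable_pt_lim f x l1 -> derivable_pt_lim g x l2 ->
  derivable_pt_lim (fun t => f t + g t) x (l1 + l2).
Proof. apply (derivable_pt_lim_plus f g). Qed.

Lemma dlim_opp f x l : derivable_pt_lim f x l -> derivable_pt_lim (fun t => - f t) x (- l).
Proof. apply (derivable_pt_lim_opp f). Qed.

Lemma dlim_mult f g x l1 l2 : derivable_pt_lim f x l1 -> derivable_pt_lim g x l2 ->
  derivable_pt_lim (fun t => f t * g t) x (l1 * g x + f x * l2).
Proof. apply (derivable_pt_lim_mult f g). Qed.

Lemma dlim_comp f g x l1 l2 : derivable_pt_lim f x l1 -> derivable_pt_lim g (f x) l2 ->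
  derivable_pt_lim (fun t => g (f t)) x (l2 * l1).
Proof. apply (derivable_pt_lim_comp f g). Qed.

Lemma dlim_affine u c v x : derivable_pt_lim (fun t => u + c * (t - v)) x c.
Proof.
  eapply dlim_val; [|apply dlim_plus; [apply derivable_pt_lim_const|]].
  2: apply (dlim_mult (fun _ => c) (fun t => t - v)); [apply derivable_pt_lim_const|].
  2: apply (dlim_plus (fun t => t) (fun _ => - v));
       [apply derivable_pt_lim_id|apply derivable_pt_lim_const].
  ring.
Qed.

Lemma dlim_continuous f x l : derivable_pt_lim f x l ->
  forall eps, 0 < eps -> exists d, 0 < d /\ forall y, Rabs (y - x) < d -> Rabs (f y - f x) < eps.
Proof.
  intros Df eps Heps.
  assert (Cf : continuity_pt f x) by (apply derivable_continuous_pt; exists l; exact Df).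
  destruct (Cf eps Heps) as [d [Hd Hy]]. exists d. split; [lra|].
  intros y Hyd. destruct (Req_dec y x) as [->|Hne].
  - rewrite Rminus_diag, Rabs_R0. exact Heps.
  - apply (Hy y). repeat split; auto.
Qed.

Lemma mean_value_increment (f f' : R -> R) a h : h <> 0 ->
  (forall c, Rabs (c - a) <= Rabs h -> derivable_pt_lim f c (f' c)) ->
  exists c, Rabs (c - a) < Rabs h /\ f (a + h) - f a = f' c * h.
Proof.
  intros Hh Df. destruct (Rlt_or_le 0 h) as [Hpos|Hneg].
  - rewrite Rabs_right in * by lra.
    destruct (MVT_cor2 f f' a (a + h)) as [c [E Hc]]; [lra| |].
    { intros c Hc. apply Df. rewrite Rabs_right; lra. }
    exists c. split; [rewrite Rabs_right; lra|]. rewrite E. ring.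
  - rewrite Rabs_left in * by lra.
    destruct (MVT_cor2 f f' (a + h) a) as [c [E Hc]]; [lra| |].
    { intros c Hc. apply Df. rewrite Rabs_left1; lra. }
    exists c. split; [rewrite Rabs_left; lra|].
    replace (f (a + h) - f a) with (- (f a - f (a + h))) by ring. rewrite E. ring.
Qed.

Lemma sumR_ext n f g : (forall k, (k < n)%nat -> f k = g k) -> sumR n f = sumR n g.
Proof. induction n; intros Efg; simpl; auto. rewrite IHn, Efg; auto. Qed.

Lemma sumR_nonneg n f : (forall k, 0 <= f k) -> 0 <= sumR n f.
Proof. intros Hf. induction n; simpl; [lra|]. specialize (Hf n). lra. Qed.

Lemma sumR_plus3 n a b c :
  sumR n (fun k => a k + b k + c k) = sumR n a + sumR n b + sumR n c.
Proof. induction n; simpl; [ring|]. rewrite IHn. ring. Qed.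

Lemma sumR2_plus3 n m a b c :
  sumR n (fun i => sumR m (fun j => a i j + b i j + c i j)) =
  sumR n (fun i => sumR m (fun j => a i j)) + sumR n (fun i => sumR m (fun j => b i j))
  + sumR n (fun i => sumR m (fun j => c i j)).
Proof.
  induction n; simpl; [ring|].
  rewrite IHn, (sumR_plus3 m (fun j => a n j) (fun j => b n j) (fun j => c n j)). ring.
Qed.

Lemma dlim_sumR n (f : nat -> R -> R) (f' : nat -> R) x :
  (forall k, (k < n)%nat -> derivable_pt_lim (f k) x (f' k)) ->
  derivable_pt_lim (fun t => sumR n (fun k => f k t)) x (sumR n f').
Proof.
  induction n; intros Df; simpl.
  - apply derivable_pt_lim_const.
  - apply dlim_plus; [apply IHn; intros k Hk|]; apply Df; lia.
Qed.

Lemma dlim_sumR2_mult3 n (a b c : nat -> nat -> R -> R) a' b' c' x :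
  (forall k l, (k < n)%nat -> (l < n)%nat ->
     derivable_pt_lim (a k l) x (a' k l) /\ derivable_pt_lim (b k l) x (b' k l) /\
     derivable_pt_lim (c k l) x (c' k l)) ->
  derivable_pt_lim (fun t => sumR n (fun k => sumR n (fun l => a k l t * b k l t * c k l t))) x
    (sumR n (fun k => sumR n (fun l => a' k l * b k l x * c k l x + a k l x * b' k l * c k l x
        + a k l x * b k l x * c' k l))).
Proof.
  intros Dabc. apply (dlim_sumR n (fun k t => sumR n (fun l => a k l t * b k l t * c k l t))).
  intros k Hk. apply (dlim_sumR n (fun l t => a k l t * b k l t * c k l t)).
  intros l Hl. destruct (Dabc k l Hk Hl) as [Da [Db Dc]].
  eapply dlim_val; [|apply dlim_mult; [apply dlim_mult; eauto|eauto]]. cbv beta; ring.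
Qed.

Lemma upd_eq x i t : upd x i t i = t.
Proof. unfold upd. now rewrite Nat.eqb_refl. Qed.

Lemma upd_neq x i j t : j <> i -> upd x i t j = x j.
Proof. intros Hji. unfold upd. destruct (Nat.eqb_spec j i); [lia|auto]. Qed.

Lemma upd_same x i : upd x i (x i) = x.
Proof. extensionality j. unfold upd. destruct (Nat.eqb_spec j i); subst; auto. Qed.

Lemma upd_upd x i s t : upd (upd x i s) i t = upd x i t.
Proof. extensionality j. unfold upd. destruct (Nat.eqb_spec j i); auto. Qed.

Lemma upd_upd_upd x i j s t u : i <> j -> upd (upd (upd x i s) j t) i u = upd (upd x i u) j t.
Proof.
  intros Hij. extensionality k. unfold upd.
  destruct (Nat.eqb_spec k i), (Nat.eqb_spec k j); subst; auto; lia.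
Qed.

Lemma distn_upd n x i t : distn n x (upd x i t) = if Nat.ltb i n then Rabs (x i - t) else 0.
Proof.
  unfold distn. induction n; simpl; auto.
  rewrite IHn. unfold upd. destruct (Nat.eqb_spec n i) as [->|Hni].
  - rewrite (proj2 (Nat.ltb_ge i i)), (proj2 (Nat.ltb_lt i (S i))) by lia. ring.
  - rewrite Rminus_diag, Rabs_R0.
    destruct (Nat.ltb_spec i n), (Nat.ltb_spec i (S n)); try lia; ring.
Qed.

Lemma distn_upd_le n x i t : distn n x (upd x i t) <= Rabs (x i - t).
Proof. rewrite distn_upd. destruct (Nat.ltb i n); [lra|apply Rabs_pos]. Qed.

Lemma distn_triang n x y z : distn n x z <= distn n x y + distn n y z.
Proof.
  unfold distn. induction n; simpl; [lra|].
  pose proof (Rabs_triang (x n - y n) (y n - z n)).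
  replace (x n - y n + (y n - z n)) with (x n - z n) in * by ring. lra.
Qed.

Lemma distn_sym n x y : distn n x y = distn n y x.
Proof. unfold distn. induction n; simpl; auto. now rewrite IHn, Rabs_minus_sym. Qed.

Lemma distn_coord n x y a : (a < n)%nat -> Rabs (x a - y a) <= distn n x y.
Proof.
  unfold distn. induction n; intros Ha; simpl; [lia|].
  destruct (Nat.eq_dec a n) as [->|Hne].
  - pose proof (sumR_nonneg n (fun i => Rabs (x i - y i)) (fun i => Rabs_pos _)). lra.
  - pose proof (Rabs_pos (x n - y n)). pose proof (IHn ltac:(lia)). lra.
Qed.

Lemma distn_upd2 n x i j s t :
  distn n x (upd (upd x i s) j t) <= Rabs (x i - s) + Rabs (x j - t).
Proof.
  destruct (Nat.eq_dec i j) as [->|Hij].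
  - rewrite upd_upd. pose proof (distn_upd_le n x j t). pose proof (Rabs_pos (x j - s)). lra.
  - pose proof (distn_triang n x (upd x i s) (upd (upd x i s) j t)).
    pose proof (distn_upd_le n x i s). pose proof (distn_upd_le n (upd x i s) j t).
    rewrite upd_neq in * by auto. lra.
Qed.

Lemma open_upd2 n U x i j : is_open n U -> U x ->
  exists r, 0 < r /\
    forall s t, Rabs (s - x i) < r -> Rabs (t - x j) < r -> U (upd (upd x i s) j t).
Proof.
  intros HU Hx. destruct (HU x Hx) as [e [He Hball]]. exists (e / 2). split; [lra|].
  intros s t Hs Ht. apply Hball. pose proof (distn_upd2 n x i j s t).
  rewrite Rabs_minus_sym in Hs, Ht. lra.
Qed.

Lemma open_upd n U x i : is_open n U -> U x ->
  exists r, 0 < r /\ forall t, Rabs (t - x i) < r -> U (upd x i t).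
Proof.
  intros HU Hx. destruct (open_upd2 n U x i i HU Hx) as [r [Hr Hball]].
  exists r. split; auto. intros t Ht. rewrite <- (upd_upd x i t t). auto.
Qed.

Definition unit_vec (j : nat) : pt := fun r => if Nat.eqb r j then 1 else 0.

Lemma partial_coord x j a : derivable_pt_lim (fun t => upd x j t a) (x j) (unit_vec j a).
Proof.
  unfold upd, unit_vec. destruct (Nat.eqb a j).
  - apply derivable_pt_lim_id.
  - apply derivable_pt_lim_const.
Qed.

Lemma pd_unique f i x l : partial_at f i x l -> pd f i x = l.
Proof.
  intros Df. unfold pd.
  pose proof (epsilon_spec (inhabits 0) (fun l => partial_at f i x l) (ex_intro _ l Df)).
  eapply uniqueness_limite; eauto.
Qed.

Lemma pd_coord a i x : pd (fun y => y a) i x = unit_vec i a.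
Proof. apply pd_unique, partial_coord. Qed.

Lemma partial_local n U f g i x l : is_open n U -> U x -> (forall y, U y -> f y = g y) ->
  partial_at f i x l -> partial_at g i x l.
Proof.
  intros HU Hx Efg Df. destruct (open_upd n U x i HU Hx) as [r [Hr Hball]].
  apply (derivable_pt_lim_locally_ext (fun t => f (upd x i t)) (fun t => g (upd x i t))
    _ (x i - r) (x i + r) l); [lra| |exact Df].
  intros z Hz. apply Efg, Hball, Rabs_def1; lra.
Qed.

Lemma partial_line f i z l s g : partial_at f i z l -> z i = s ->
  (forall u, f (upd z i u) = g u) -> derivable_pt_lim g s l.
Proof. intros Df <- Efg. eapply dlim_ext; [exact Efg|reflexivity|exact Df]. Qed.

Definition deriv_family (n : nat) (U : pt -> Prop) (f : pt -> R) (F : list nat -> pt -> R) :=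
  (forall y, U y -> F nil y = f y) /\ (forall l, cont_on n U (F l)) /\
  (forall l i y, (i < n)%nat -> U y -> partial_at (F l) i y (F (cons i l) y)).

Lemma pd_family n U f F i x : is_open n U -> U x -> (i < n)%nat ->
  deriv_family n U f F -> pd f i x = F (cons i nil) x.
Proof.
  intros HU Hx Hi (F0 & _ & DF). apply pd_unique.
  eapply partial_local; [exact HU|exact Hx|exact F0|]. auto.
Qed.

Definition cont2_at (Q : R -> R -> R) a b := forall eps, 0 < eps ->
  exists d, 0 < d /\ forall s t, Rabs (s - a) < d -> Rabs (t - b) < d -> Rabs (Q s t - Q a b) < eps.

Lemma cont2_at_upd n U G x i j : is_open n U -> U x -> cont_on n U G ->
  cont2_at (fun s t => G (upd (upd x i s) j t)) (x i) (x j).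
Proof.
  intros HU Hx HG eps Heps. destruct (HG x Hx eps Heps) as [d [Hd Hc]].
  destruct (open_upd2 n U x i j HU Hx) as [r [Hr Hball]].
  exists (Rmin r (d / 2)). split; [apply Rmin_pos; lra|].
  intros s t Hs Ht. rewrite !upd_same.
  pose proof (Rmin_l r (d / 2)). pose proof (Rmin_r r (d / 2)).
  pose proof (distn_upd2 n x i j s t).
  rewrite (Rabs_minus_sym (x i)), (Rabs_minus_sym (x j)) in *.
  apply Hc; [apply Hball|]; lra.
Qed.

(* Both orders of differentiation evaluate the same second difference
   phi(a+h,b+h) - phi(a+h,b) - phi(a,b+h) + phi(a,b), by two applications of the
   mean value theorem each. *)
Lemma second_difference_mvt (phi P P' Q Q' : R -> R -> R) a b h : 0 < h ->
  (forall s t, Rabs (s - a) <= h -> Rabs (t - b) <= h ->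
     derivable_pt_lim (fun s' => phi s' t) s (P s t)) ->
  (forall s t, Rabs (s - a) <= h -> Rabs (t - b) <= h ->
     derivable_pt_lim (fun t' => P s t') t (Q s t)) ->
  (forall s t, Rabs (s - a) <= h -> Rabs (t - b) <= h ->
     derivable_pt_lim (fun t' => phi s t') t (P' s t)) ->
  (forall s t, Rabs (s - a) <= h -> Rabs (t - b) <= h ->
     derivable_pt_lim (fun s' => P' s' t) s (Q' s t)) ->
  exists xi eta xi' eta', Rabs (xi - a) < h /\ Rabs (eta - b) < h /\
    Rabs (xi' - a) < h /\ Rabs (eta' - b) < h /\ Q xi eta = Q' xi' eta'.
Proof.
  intros Hh D1 D2 D3 D4.
  assert (Ah : Rabs h = h) by (apply Rabs_right; lra).
  assert (hn0 : h <> 0) by lra.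
  assert (Sh : forall u, Rabs (u + h - u) <= h)
    by (intros u; replace (u + h - u) with h by ring; lra).
  assert (S0 : forall u, Rabs (u - u) <= h) by (intros u; rewrite Rminus_diag, Rabs_R0; lra).
  destruct (mean_value_increment (fun s => phi s (b + h) - phi s b)
    (fun s => P s (b + h) - P s b) a h hn0) as [xi [Hxi E1]].
  { intros c Hc. rewrite Ah in Hc. apply dlim_plus; [|apply dlim_opp]; apply D1; auto. }
  destruct (mean_value_increment (fun t => P xi t) (fun t => Q xi t) b h hn0) as [eta [Heta E2]].
  { intros c Hc. rewrite Ah in *. apply D2; lra. }
  destruct (mean_value_increment (fun t => phi (a + h) t - phi a t)
    (fun t => P' (a + h) t - P' a t) b h hn0) as [eta' [Heta' E3]].
  { intros c Hc. rewrite Ah in Hc. apply dlim_plus; [|apply dlim_opp]; apply D3; auto. }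
  destruct (mean_value_increment (fun s => P' s eta') (fun s => Q' s eta') a h hn0)
    as [xi' [Hxi' E4]].
  { intros c Hc. rewrite Ah in *. apply D4; lra. }
  rewrite Ah in *. exists xi, eta, xi', eta'. repeat split; auto.
  apply Rmult_eq_reg_r with (h * h); [|nra].
  rewrite <- !Rmult_assoc, <- E2, <- E4, <- E1, <- E3. ring.
Qed.

Lemma schwarz_R2 (phi P P' Q Q' : R -> R -> R) a b r : 0 < r ->
  (forall s t, Rabs (s - a) < r -> Rabs (t - b) < r ->
     derivable_pt_lim (fun s' => phi s' t) s (P s t)) ->
  (forall s t, Rabs (s - a) < r -> Rabs (t - b) < r ->
     derivable_pt_lim (fun t' => P s t') t (Q s t)) ->
  (forall s t, Rabs (s - a) < r -> Rabs (t - b) < r ->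
     derivable_pt_lim (fun t' => phi s t') t (P' s t)) ->
  (forall s t, Rabs (s - a) < r -> Rabs (t - b) < r ->
     derivable_pt_lim (fun s' => P' s' t) s (Q' s t)) ->
  cont2_at Q a b -> cont2_at Q' a b -> Q a b = Q' a b.
Proof.
  intros Hr D1 D2 D3 D4 CQ CQ'.
  destruct (Req_dec (Q a b) (Q' a b)) as [|Hne]; auto. exfalso.
  set (eps := Rabs (Q a b - Q' a b)).
  assert (Heps : 0 < eps) by (apply Rabs_pos_lt; lra).
  destruct (CQ (eps / 2)) as [d1 [Hd1 C1]]; [lra|].
  destruct (CQ' (eps / 2)) as [d2 [Hd2 C2]]; [lra|].
  set (h := Rmin r (Rmin d1 d2) / 2).
  assert (Hm : 0 < Rmin r (Rmin d1 d2)) by (repeat apply Rmin_pos; auto).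
  assert (Hh : 0 < h /\ h < r /\ h < d1 /\ h < d2).
  { pose proof (Rmin_l r (Rmin d1 d2)). pose proof (Rmin_r r (Rmin d1 d2)).
    pose proof (Rmin_l d1 d2). pose proof (Rmin_r d1 d2). unfold h. lra. }
  destruct (second_difference_mvt phi P P' Q Q' a b h)
    as (xi & eta & xi' & eta' & Hxi & Heta & Hxi' & Heta' & E);
    [lra|intros; apply D1; lra|intros; apply D2; lra|intros; apply D3; lra|intros; apply D4; lra|].
  specialize (C1 xi eta ltac:(lra) ltac:(lra)). specialize (C2 xi' eta' ltac:(lra) ltac:(lra)).
  rewrite E, Rabs_minus_sym in C1.
  pose proof (Rabs_triang (Q a b - Q' xi' eta') (Q' xi' eta' - Q' a b)) as T.
  replace (Q a b - Q' xi' eta' + (Q' xi' eta' - Q' a b)) with (Q a b - Q' a b) in T by ring.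
  fold eps in T. lra.
Qed.

Lemma deriv_family_schwarz n U f F x i j : is_open n U -> U x ->
  (i < n)%nat -> (j < n)%nat -> deriv_family n U f F ->
  F (cons j (cons i nil)) x = F (cons i (cons j nil)) x.
Proof.
  intros HU Hx Hi Hj (_ & FC & FD).
  destruct (Nat.eq_dec i j) as [->|Hij]; [reflexivity|].
  destruct (open_upd2 n U x i j HU Hx) as [r [Hr Hball]].
  set (y := fun s t => upd (upd x i s) j t).
  assert (Ei : forall s t, y s t i = s)
    by (intros; unfold y; rewrite upd_neq by auto; apply upd_eq).
  assert (Ej : forall s t, y s t j = t) by (intros; unfold y; apply upd_eq).
  assert (Ui : forall s t u, upd (y s t) i u = y u t) by (intros; unfold y; apply upd_upd_upd, Hij).
  assert (Uj : forall s t u, upd (y s t) j u = y s u) by (intros; unfold y; apply upd_upd).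
  pose proof (schwarz_R2 (fun s t => F nil (y s t)) (fun s t => F (cons i nil) (y s t))
     (fun s t => F (cons j nil) (y s t)) (fun s t => F (cons j (cons i nil)) (y s t))
     (fun s t => F (cons i (cons j nil)) (y s t)) (x i) (x j) r Hr) as S.
  assert (Y0 : y (x i) (x j) = x) by (unfold y; rewrite !upd_same; reflexivity).
  cbv beta in S. rewrite Y0 in S. apply S; clear S.
  1-4: intros s t Hs Ht; (eapply partial_line; [apply FD; [auto|apply Hball; auto]| |]);
    [apply Ei || apply Ej | intros u; (rewrite Ui || rewrite Uj); reflexivity].
  all: apply (cont2_at_upd n U); auto.
Qed.

(* The chain rule along the line t |-> (t, b + c (t - a)), with only the first
   partial derivative assumed continuous. *)
Lemma chain_rule_line (phi A : R -> R -> R) Bv a b c r : 0 < r ->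
  (forall t u, Rabs (t - a) < r -> derivable_pt_lim (fun t' => phi t' u) t (A t u)) ->
  derivable_pt_lim (fun u => phi a u) b Bv ->
  cont2_at A a b ->
  derivable_pt_lim (fun t => phi t (b + c * (t - a))) a (A a b + c * Bv).
Proof.
  intros Hr DA DB CA eps Heps.
  destruct (CA (eps / 2)) as [d1 [Hd1 C1]]; [lra|].
  assert (DG : derivable_pt_lim (fun h => phi a (b + c * (h - 0))) 0 (Bv * c)).
  { apply (dlim_comp (fun h => b + c * (h - 0)) (fun u => phi a u)); [apply dlim_affine|].
    replace (b + c * (0 - 0)) with b by ring. exact DB. }
  destruct (DG (eps / 2)) as [d2 DG2]; [lra|].
  set (K := 1 + Rabs c).
  assert (HK : 0 < K) by (unfold K; pose proof (Rabs_pos c); lra).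
  set (dd := Rmin r (Rmin (d1 / K) d2)).
  assert (Hdd : 0 < dd).
  { unfold dd. repeat apply Rmin_pos; auto. apply Rdiv_lt_0_compat; auto. apply cond_pos. }
  exists (mkposreal dd Hdd). simpl. intros h hn0 Hh.
  assert (Hh1 : Rabs h < r) by (eapply Rlt_le_trans; [exact Hh|apply Rmin_l]).
  assert (Hh2 : Rabs h < d1 / K)
    by (eapply Rlt_le_trans; [exact Hh|]; eapply Rle_trans; [apply Rmin_r|apply Rmin_l]).
  assert (Hh3 : Rabs h < d2)
    by (eapply Rlt_le_trans; [exact Hh|]; eapply Rle_trans; [apply Rmin_r|apply Rmin_r]).
  assert (Hh4 : Rabs h * K < d1).
  { apply (Rmult_lt_compat_r K) in Hh2; auto. unfold Rdiv in Hh2.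
    rewrite Rmult_assoc, Rinv_l in Hh2 by lra. lra. }
  set (u := b + c * h).
  destruct (mean_value_increment (fun t => phi t u) (fun t => A t u) a h hn0) as [xi [Hxi E]].
  { intros t Ht. apply DA. lra. }
  specialize (DG2 h hn0 Hh3). rewrite Rplus_0_l, Rminus_0_r in DG2.
  replace (b + c * (a + h - a)) with u by (unfold u; ring).
  replace (b + c * (a - a)) with b by ring.
  replace (b + c * (0 - 0)) with b in DG2 by ring. fold u in DG2.
  replace ((phi (a + h) u - phi a b) / h - (A a b + c * Bv))
    with ((A xi u - A a b) + ((phi a u - phi a b) / h - Bv * c)).
  2: { replace (phi (a + h) u - phi a b) with ((phi (a + h) u - phi a u) + (phi a u - phi a b))
         by ring.
       rewrite E. field. exact hn0. }
  assert (HC : Rabs (A xi u - A a b) < eps / 2).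
  { pose proof (Rabs_pos c). pose proof (Rabs_pos h). unfold K in Hh4.
    apply C1; [nra|]. unfold u. replace (b + c * h - b) with (c * h) by ring.
    rewrite Rabs_mult. nra. }
  pose proof (Rabs_triang (A xi u - A a b) ((phi a u - phi a b) / h - Bv * c)).
  lra.
Qed.

Lemma cont_const n U c : cont_on n U (fun _ => c).
Proof.
  intros x Hx eps Heps. exists 1. split; [lra|].
  intros. rewrite Rminus_diag, Rabs_R0. exact Heps.
Qed.

Lemma cont_coord n U a : (a < n)%nat -> cont_on n U (fun y => y a).
Proof.
  intros Ha x Hx eps Heps. exists eps. split; auto. intros y Hy Hd.
  pose proof (distn_coord n y x a Ha) as Hc. rewrite distn_sym in Hc. lra.
Qed.

Lemma cont_plus n U f g : cont_on n U f -> cont_on n U g -> cont_on n U (fun y => f y + g y).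
Proof.
  intros Hf Hg x Hx eps Heps.
  destruct (Hf x Hx (eps / 2)) as [d1 [Hd1 C1]]; [lra|].
  destruct (Hg x Hx (eps / 2)) as [d2 [Hd2 C2]]; [lra|].
  exists (Rmin d1 d2). split; [apply Rmin_pos; auto|].
  intros y Hy Hd. pose proof (Rmin_l d1 d2). pose proof (Rmin_r d1 d2).
  specialize (C1 y Hy ltac:(lra)). specialize (C2 y Hy ltac:(lra)).
  replace (f y + g y - (f x + g x)) with ((f y - f x) + (g y - g x)) by ring.
  pose proof (Rabs_triang (f y - f x) (g y - g x)). lra.
Qed.

Lemma cont_mult n U f g : cont_on n U f -> cont_on n U g -> cont_on n U (fun y => f y * g y).
Proof.
  intros Hf Hg x Hx eps Heps.
  set (K := Rabs (f x) + Rabs (g x) + 1).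
  assert (HK : 0 < K) by (unfold K; pose proof (Rabs_pos (f x)); pose proof (Rabs_pos (g x)); lra).
  set (e := Rmin 1 (eps / (2 * K))).
  assert (He : 0 < e) by (unfold e; apply Rmin_pos; [lra|apply Rdiv_lt_0_compat; lra]).
  assert (He1 : e <= 1) by apply Rmin_l.
  assert (HeK : e * K <= eps / 2).
  { pose proof (Rmin_r 1 (eps / (2 * K))) as Hr. fold e in Hr.
    apply Rmult_le_compat_r with (r := K) in Hr; [|lra].
    replace (eps / (2 * K) * K) with (eps / 2) in Hr by (field; lra). lra. }
  destruct (Hf x Hx e He) as [d1 [Hd1 C1]].
  destruct (Hg x Hx e He) as [d2 [Hd2 C2]].
  exists (Rmin d1 d2). split; [apply Rmin_pos; auto|].
  intros y Hy Hd. pose proof (Rmin_l d1 d2). pose proof (Rmin_r d1 d2).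
  specialize (C1 y Hy ltac:(lra)). specialize (C2 y Hy ltac:(lra)).
  replace (f y * g y - f x * g x) with ((f y - f x) * g y + f x * (g y - g x)) by ring.
  pose proof (Rabs_triang ((f y - f x) * g y) (f x * (g y - g x))) as T.
  rewrite !Rabs_mult in T.
  assert (Hgy : Rabs (g y) <= Rabs (g x) + 1).
  { replace (g y) with (g x + (g y - g x)) by ring.
    pose proof (Rabs_triang (g x) (g y - g x)). lra. }
  pose proof (Rabs_pos (f y - f x)). pose proof (Rabs_pos (f x)). pose proof (Rabs_pos (g y - g x)).
  assert (Rabs (f y - f x) * Rabs (g y) <= e * (Rabs (g x) + 1))
    by (apply Rmult_le_compat; auto using Rabs_pos; lra).
  assert (Rabs (f x) * Rabs (g y - g x) <= Rabs (f x) * e) by (apply Rmult_le_compat_l; lra).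
  unfold K in HeK. lra.
Qed.

Lemma cont_comp n U phi f : (forall z, exists l, derivable_pt_lim phi z l) -> cont_on n U f ->
  cont_on n U (fun y => phi (f y)).
Proof.
  intros Dphi Hf x Hx eps Heps. destruct (Dphi (f x)) as [l Dl].
  destruct (dlim_continuous phi (f x) l Dl eps Heps) as [d1 [Hd1 C1]].
  destruct (Hf x Hx d1 Hd1) as [d [Hd C]]. exists d. split; [exact Hd|].
  intros y Hy Hyd. apply C1, C; auto.
Qed.

Lemma cont_on_dist0 n U f x y : cont_on n U f -> U x -> U y -> distn n x y = 0 -> f y = f x.
Proof.
  intros Hf Hx Hy Hd. destruct (Req_dec (f y) (f x)) as [|Hne]; auto. exfalso.
  assert (Heps : 0 < Rabs (f y - f x)) by (apply Rabs_pos_lt; lra).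
  destruct (Hf x Hx _ Heps) as [d [Hd0 C]]. specialize (C y Hy ltac:(lra)). lra.
Qed.

(* The family [F] is built by choosing, with [epsilon], derivatives inside the class. *)
Lemma smooth_on_of_closed n U (S : (pt -> R) -> Prop) :
  (forall f, S f -> cont_on n U f) ->
  (forall f i, S f -> (i < n)%nat -> exists g, S g /\ forall x, U x -> partial_at f i x (g x)) ->
  forall f, S f -> smooth_on n U f.
Proof.
  intros SC SD f Sf.
  set (P := fun i g d => S d /\ forall x, U x -> partial_at g i x (d x)).
  set (Dv := fun i g => if Nat.ltb i n then epsilon (inhabits (fun _ : pt => 0)) (P i g) else g).
  set (F := fix F (l : list nat) : pt -> R := match l with nil => f | cons i l' => Dv i (F l') end).
  assert (SF : forall l, S (F l)).
  { induction l as [|i l IH]; simpl; auto. unfold Dv. destruct (Nat.ltb_spec i n) as [Hi|]; auto.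
    destruct (SD _ _ IH Hi) as [g Hg].
    exact (proj1 (epsilon_spec (inhabits (fun _ : pt => 0)) (P i (F l)) (ex_intro _ g Hg))). }
  exists F. split; [|split].
  - reflexivity.
  - intros l. apply SC, SF.
  - intros l i x Hi Hx. simpl. unfold Dv.
    destruct (Nat.ltb_spec i n) as [_|]; [|lia].
    destruct (SD _ _ (SF l) Hi) as [g Hg].
    exact (proj2 (epsilon_spec (inhabits (fun _ : pt => 0)) (P i (F l)) (ex_intro _ g Hg)) x Hx).
Qed.

Lemma smooth1_of_closed (S : (R -> R) -> Prop) :
  (forall f, S f -> exists g, S g /\ forall x, derivable_pt_lim f x (g x)) ->
  forall f, S f -> smooth1 f.
Proof.
  intros SD f Sf.
  set (P := fun g d => S d /\ forall x, derivable_pt_lim g x (d x)).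
  set (Dv := fun g => epsilon (inhabits (fun _ : R => 0)) (P g)).
  set (F := fix F (k : nat) : R -> R := match k with O => f | S k' => Dv (F k') end).
  assert (SF : forall k, S (F k)).
  { induction k; simpl; auto. unfold Dv. destruct (SD _ IHk) as [g Hg].
    exact (proj1 (epsilon_spec (inhabits (fun _ : R => 0)) (P (F k)) (ex_intro _ g Hg))). }
  exists F. split; [reflexivity|].
  intros k x. simpl. unfold Dv. destruct (SD _ (SF k)) as [g Hg].
  exact (proj2 (epsilon_spec (inhabits (fun _ : R => 0)) (P (F k)) (ex_intro _ g Hg)) x).
Qed.

Lemma smooth1_deriv phi : smooth1 phi ->
  exists phi', smooth1 phi' /\ forall x, derivable_pt_lim phi x (phi' x).
Proof.
  intros [F [F0 DF]]. exists (F 1%nat). split.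
  - exists (fun k => F (S k)). split; [reflexivity|intros; apply DF].
  - intros x. eapply dlim_ext; [intros t; apply F0|reflexivity|apply DF].
Qed.

Lemma smooth1_antider g A : smooth1 g -> (forall x, derivable_pt_lim A x (g x)) -> smooth1 A.
Proof.
  intros [G [G0 DG]] DA. exists (fun k => match k with O => A | S k' => G k' end).
  split; [reflexivity|]. intros [|k] x; [rewrite G0; apply DA|apply DG].
Qed.

Section Reciprocal.
Variable delta : R -> R.
Hypothesis delta_smooth : smooth1 delta.
Hypothesis delta_neq0 : forall s, delta s <> 0.

Inductive recip_alg : (R -> R) -> Prop :=
| recip_alg_smooth phi : smooth1 phi -> recip_alg phi
| recip_alg_mult f g : recip_alg f -> recip_alg g -> recip_alg (fun t => f t * g t)
| recip_alg_plus f g : recip_alg f -> recip_alg g -> recip_alg (fun t => f t + g t)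
| recip_alg_opp f : recip_alg f -> recip_alg (fun t => - f t)
| recip_alg_inv : recip_alg (fun t => / delta t).

Lemma recip_alg_deriv f : recip_alg f ->
  exists g, recip_alg g /\ forall x, derivable_pt_lim f x (g x).
Proof.
  induction 1 as [phi Hphi | f g Hf [f' [Hf' Df]] Hg [g' [Hg' Dg]]
                 | f g _ [f' [Hf' Df]] _ [g' [Hg' Dg]] | f _ [f' [Hf' Df]] | ].
  - destruct (smooth1_deriv phi Hphi) as [p [Hp Dp]]. exists p. split; [constructor|]; auto.
  - exists (fun t => f' t * g t + f t * g' t).
    split; [apply recip_alg_plus; apply recip_alg_mult|intros x; apply dlim_mult]; auto.
  - exists (fun t => f' t + g' t). split; [apply recip_alg_plus|intros; apply dlim_plus]; auto.
  - exists (fun t => - f' t). split; [apply recip_alg_opp|intros; apply dlim_opp]; auto.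
  - destruct (smooth1_deriv delta delta_smooth) as [d' [Hd' Dd]].
    exists (fun t => - (d' t * (/ delta t * / delta t))). split.
    + apply recip_alg_opp, recip_alg_mult; [constructor; auto|].
      apply recip_alg_mult; apply recip_alg_inv.
    + intros x. pose proof (derivable_pt_lim_div (fct_cte 1) delta x 0 (d' x)
        (derivable_pt_lim_const 1 x) (Dd x) (delta_neq0 x)) as Dq.
      eapply dlim_ext; [| |exact Dq].
      * intros t. unfold div_fct, fct_cte. field. apply delta_neq0.
      * unfold fct_cte, Rsqr. field. apply delta_neq0.
Qed.

Lemma smooth1_inv : smooth1 (fun t => / delta t).
Proof. apply (smooth1_of_closed recip_alg); [apply recip_alg_deriv|apply recip_alg_inv]. Qed.
End Reciprocal.

Section Generated.
Variable n : nat.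

Inductive smooth_gen : (pt -> R) -> Prop :=
| smooth_gen_const c : smooth_gen (fun _ => c)
| smooth_gen_coord a : (a < n)%nat -> smooth_gen (fun y => y a)
| smooth_gen_plus f g : smooth_gen f -> smooth_gen g -> smooth_gen (fun y => f y + g y)
| smooth_gen_mult f g : smooth_gen f -> smooth_gen g -> smooth_gen (fun y => f y * g y)
| smooth_gen_comp phi f : smooth1 phi -> smooth_gen f -> smooth_gen (fun y => phi (f y)).

Variable U : pt -> Prop.

Lemma smooth_gen_cont f : smooth_gen f -> cont_on n U f.
Proof.
  induction 1 as [c|a Ha|f g _ IHf _ IHg|f g _ IHf _ IHg|phi f Hphi _ IHf].
  - apply cont_const.
  - apply cont_coord, Ha.
  - apply cont_plus; auto.
  - apply cont_mult; auto.
  - apply cont_comp; auto. intros z. destruct (smooth1_deriv phi Hphi) as [p [_ Dp]]. eauto.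
Qed.

Lemma smooth_gen_deriv f i : smooth_gen f -> (i < n)%nat ->
  exists g, smooth_gen g /\ forall x, U x -> partial_at f i x (g x).
Proof.
  intros Hf Hi.
  induction Hf as [c|a Ha|f g _ [f' [Hf' Df]] _ [g' [Hg' Dg]]
                  |f g Hf [f' [Hf' Df]] Hg [g' [Hg' Dg]]|phi f Hphi Hf [f' [Hf' Df]]].
  - exists (fun _ => 0). split; [constructor|]. intros x _. apply derivable_pt_lim_const.
  - exists (fun _ => unit_vec i a). split; [constructor|]. intros x _. apply partial_coord.
  - exists (fun y => f' y + g' y). split; [constructor; auto|].
    intros x Hx. apply dlim_plus; [apply Df|apply Dg]; auto.
  - exists (fun y => f' y * g y + f y * g' y). split; [repeat constructor; auto|].
    intros x Hx. unfold partial_at. eapply dlim_val; [|apply dlim_mult; [apply Df|apply Dg]; auto].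
    cbv beta. rewrite upd_same. reflexivity.
  - destruct (smooth1_deriv phi Hphi) as [p [Hp Dp]].
    exists (fun y => p (f y) * f' y). split; [repeat constructor; auto|].
    intros x Hx. unfold partial_at. eapply dlim_val; [|apply dlim_comp; [apply Df; auto|apply Dp]].
    cbv beta. rewrite upd_same. reflexivity.
Qed.

Lemma smooth_gen_smooth f : smooth_gen f -> smooth_on n U f.
Proof.
  apply (smooth_on_of_closed n U smooth_gen); [apply smooth_gen_cont|].
  intros; apply smooth_gen_deriv; auto.
Qed.
End Generated.

Definition PiAt (m : R) (x : pt) (i j : nat) : R :=
  PiMu (fun _ => 0) (fun _ => 0) (fun _ => m) i j x.

Lemma PiAt_affine m y k l :
  PiAt m y k l = sumR 6 (fun a => PiAt 0 (unit_vec a) k l * y a) + PiAt 1 (fun _ => 0) k l * m.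
Proof.
  unfold PiAt, unit_vec.
  destruct k as [|[|[|[|[|[|k]]]]]]; destruct l as [|[|[|[|[|[|l]]]]]]; simpl; ring.
Qed.

(* The x_j-derivative of mu3(gamma, M.gamma), from the partial derivatives m 0 .. m 3 of mu3
   at (gamma, M.gamma): d/dM_a = gamma_a d_s and d/dgamma_a = d_gamma_a + M_a d_s. *)
Definition grad_mu_gs (m : nat -> R) (x : pt) (j : nat) : R :=
  if Nat.ltb j 3 then x (j + 3)%nat * m 3%nat
  else m (j - 3)%nat + x (j - 3)%nat * m 3%nat.

(* Pi_mu is affine in (x, mu3), so its x_j-derivative is Pi with x replaced by e_j
   and mu3 by its x_j-derivative. *)
Definition dPiAt (m : nat -> R) (x : pt) (j k l : nat) : R :=
  PiAt (grad_mu_gs m x j) (unit_vec j) k l.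

Definition symm_upper (a : nat -> nat -> R) (i j : nat) : R :=
  if Nat.leb i j then a i j else a j i.

(* The three parts of {f,{g,h}}(x) given by the Leibniz rule on the inner bracket; the
   Hessians G, H of g, h are read through [symm_upper], which builds in their symmetry. *)
Definition jac_hess_g m x (f h : nat -> R) G :=
  sumR 6 (fun i => sumR 6 (fun j => f i * PiAt m x i j *
    sumR 6 (fun k => sumR 6 (fun l => symm_upper G j k * PiAt m x k l * h l)))).

Definition jac_dPi m (dm : nat -> R) x (f g h : nat -> R) :=
  sumR 6 (fun i => sumR 6 (fun j => f i * PiAt m x i j *
    sumR 6 (fun k => sumR 6 (fun l => g k * dPiAt dm x j k l * h l)))).

Definition jac_hess_h m x (f g : nat -> R) H :=
  sumR 6 (fun i => sumR 6 (fun j => f i * PiAt m x i j *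
    sumR 6 (fun k => sumR 6 (fun l => g k * PiAt m x k l * symm_upper H j l)))).

Definition det3 (f g h : nat -> R) :=
  f 0%nat * (g 1%nat * h 2%nat - g 2%nat * h 1%nat)
  - f 1%nat * (g 0%nat * h 2%nat - g 2%nat * h 0%nat)
  + f 2%nat * (g 0%nat * h 1%nat - g 1%nat * h 0%nat).

(* The Hessian of g enters {f,{g,h}} and {h,{f,g}}, with opposite signs since Pi is
   skew-symmetric. *)
Lemma jac_hess_cancel m x f h G : jac_hess_g m x f h G + jac_hess_h m x h f G = 0.
Proof. unfold jac_hess_g, jac_hess_h, PiAt, symm_upper. simpl. ring. Qed.

Lemma jac_dPi_cyclic m dm x f g h :
  jac_dPi m dm x f g h + jac_dPi m dm x g h f + jac_dPi m dm x h f g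
  = (x 4%nat * dm 0%nat - x 3%nat * dm 1%nat) * det3 f g h.
Proof. unfold jac_dPi, dPiAt, PiAt, unit_vec, grad_mu_gs, det3. simpl. ring. Qed.

Lemma open_Omega D : is_open 3 D -> is_open 6 (Omega D).
Proof.
  intros HD x Hx. destruct (HD _ Hx) as [e [He Hball]]. exists e. split; auto.
  intros y Hy. apply Hball. unfold distn, restr in *. simpl in *.
  pose proof (Rabs_pos (x 0%nat - y 0%nat)). pose proof (Rabs_pos (x 1%nat - y 1%nat)).
  pose proof (Rabs_pos (x 2%nat - y 2%nat)). lra.
Qed.

Lemma open_DxR D : is_open 3 D -> is_open 4 (DxR D).
Proof.
  intros HD x Hx. destruct (HD _ Hx) as [e [He Hball]]. exists e. split; auto.
  intros y Hy. apply Hball. unfold distn, restr in *. simpl in *.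
  pose proof (Rabs_pos (x 3%nat - y 3%nat)). lra.
Qed.

Lemma DxR_gs D x : Omega D x -> DxR D (gs x).
Proof.
  unfold Omega, DxR. intros Hx.
  replace (restr 3 (gs x)) with (restr 3 (fun k => x (3 + k)%nat)); [exact Hx|].
  extensionality k. unfold restr. destruct k as [|[|[|k]]]; reflexivity.
Qed.

Lemma DxR_upd_s D q u : DxR D (upd q 3 u) <-> DxR D q.
Proof.
  unfold DxR. replace (restr 3 (upd q 3 u)) with (restr 3 q); [tauto|].
  extensionality k. unfold restr, upd. destruct k as [|[|[|k]]]; reflexivity.
Qed.

Lemma gs_upd_M x j t : (j < 3)%nat ->
  gs (upd x j t) = upd (gs x) 3 (Mdotg x + x (j + 3)%nat * (t - x j)).
Proof.
  intros Hj. extensionality k. unfold gs, upd, Mdotg.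
  destruct j as [|[|[|j]]]; try lia; destruct k as [|[|[|[|k]]]]; simpl; auto; ring.
Qed.

Lemma gs_upd_gamma x j t : (3 <= j < 6)%nat ->
  gs (upd x j t) = upd (upd (gs x) (j - 3) t) 3 (Mdotg x + x (j - 3)%nat * (t - x j)).
Proof.
  intros Hj. extensionality k. unfold gs, upd, Mdotg.
  destruct j as [|[|[|[|[|[|j]]]]]]; try lia; destruct k as [|[|[|[|k]]]]; simpl; auto; ring.
Qed.

Definition gamma_norm2 (p : pt) : R := p 0%nat * p 0%nat + p 1%nat * p 1%nat + p 2%nat * p 2%nat.

(* gamma = (p0, p1, p2) and M = p3 gamma / |gamma|^2, so that M.gamma = p3. *)
Definition lift (p : pt) : pt := fun k =>
  match k with
  | 0 => p 3%nat * p 0%nat / gamma_norm2 p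
  | 1 => p 3%nat * p 1%nat / gamma_norm2 p
  | 2 => p 3%nat * p 2%nat / gamma_norm2 p
  | 3 => p 0%nat | 4 => p 1%nat | 5 => p 2%nat
  | _ => 0
  end.

Lemma gamma_norm2_pos D p : (forall q, D q -> ~ (q 0%nat = 0 /\ q 1%nat = 0 /\ q 2%nat = 0)) ->
  DxR D p -> 0 < gamma_norm2 p.
Proof.
  intros Hnz Hp. specialize (Hnz _ Hp). unfold restr in Hnz. simpl in Hnz. unfold gamma_norm2.
  destruct (Req_dec (p 0%nat) 0), (Req_dec (p 1%nat) 0), (Req_dec (p 2%nat) 0);
    try (exfalso; apply Hnz; auto; fail); nra.
Qed.

Lemma Omega_lift D p : DxR D p -> Omega D (lift p).
Proof.
  unfold Omega, DxR. intros Hp.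
  replace (restr 3 (fun k => lift p (3 + k)%nat)) with (restr 3 p); [exact Hp|].
  extensionality k. unfold restr. destruct k as [|[|[|k]]]; reflexivity.
Qed.

Lemma distn_gs_lift p : 0 < gamma_norm2 p -> distn 4 (gs (lift p)) p = 0.
Proof.
  intros Hn. unfold distn, gs, Mdotg, lift. simpl.
  replace (p 3%nat * p 0%nat / gamma_norm2 p * p 0%nat + p 3%nat * p 1%nat / gamma_norm2 p * p 1%nat
           + p 3%nat * p 2%nat / gamma_norm2 p * p 2%nat) with (p 3%nat)
    by (unfold gamma_norm2 in *; field; lra).
  rewrite !Rminus_diag, !Rabs_R0. ring.
Qed.

Section Jacobiator.
Variable D : pt -> Prop.
Hypothesis D_open : is_open 3 D.
Variables (mu : pt -> R) (MF : list nat -> pt -> R).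
Hypothesis mu_family : deriv_family 4 (DxR D) mu MF.

Definition dmu_at (x : pt) (a : nat) : R := MF (cons a nil) (gs x).

Lemma partial_mu_gs_M x j : (j < 3)%nat -> Omega D x ->
  partial_at (fun y => MF nil (gs y)) j x (grad_mu_gs (dmu_at x) x j).
Proof.
  destruct mu_family as (_ & _ & MD). intros Hj Hx.
  unfold grad_mu_gs. rewrite (proj2 (Nat.ltb_lt j 3%nat) Hj).
  unfold partial_at. eapply dlim_ext; [intros t; rewrite gs_upd_M by exact Hj; reflexivity|..].
  2: { apply (dlim_comp (fun t => Mdotg x + x (j + 3)%nat * (t - x j))
                        (fun u => MF nil (upd (gs x) 3 u))); [apply dlim_affine|].
       replace (Mdotg x + x (j + 3)%nat * (x j - x j)) with (Mdotg x) by ring.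
       apply (MD nil 3%nat (gs x)); [lia|apply DxR_gs, Hx]. }
  unfold dmu_at. ring.
Qed.

Lemma partial_mu_gs_gamma x j : (3 <= j < 6)%nat -> Omega D x ->
  partial_at (fun y => MF nil (gs y)) j x (grad_mu_gs (dmu_at x) x j).
Proof.
  destruct mu_family as (_ & MC & MD). intros Hj Hx.
  unfold grad_mu_gs. rewrite (proj2 (Nat.ltb_ge j 3%nat)) by lia.
  set (a := (j - 3)%nat). assert (Ha : (a < 3)%nat) by (unfold a; lia).
  set (p := gs x). assert (Hp : DxR D p) by (apply DxR_gs, Hx).
  assert (Epa : p a = x j)
    by (unfold p, a; destruct j as [|[|[|[|[|[|j]]]]]]; try lia; reflexivity).
  destruct (open_upd 4 (DxR D) p a (open_DxR D D_open) Hp) as [r [Hr Hball]].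
  unfold partial_at. eapply dlim_ext; [intros t; rewrite gs_upd_gamma by exact Hj; reflexivity|..].
  2: { rewrite <- Epa. change (Mdotg x) with (p 3%nat). fold a p.
       apply (chain_rule_line (fun t u => MF nil (upd (upd p a t) 3 u))
                (fun t u => MF (cons a nil) (upd (upd p a t) 3 u)) (dmu_at x 3) (p a) (p 3%nat)
                (x a) r Hr).
       - intros t u Ht.
         eapply partial_line; [apply MD; [lia|apply DxR_upd_s, Hball, Ht]| |].
         + rewrite upd_neq by lia. apply upd_eq.
         + intros v. rewrite upd_upd_upd by lia. reflexivity.
       - rewrite upd_same. apply (MD nil 3%nat p); [lia|exact Hp].
       - apply (cont2_at_upd 4 (DxR D)); auto using open_DxR. }
  rewrite !upd_same. reflexivity.
Qed.

Lemma partial_mu_gs x j : Omega D x -> (j < 6)%nat ->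
  partial_at (fun y => mu (gs y)) j x (grad_mu_gs (dmu_at x) x j).
Proof.
  destruct mu_family as (M0 & _ & _). intros Hx Hj.
  apply (partial_local 6 (Omega D) (fun y => MF nil (gs y))); auto using open_Omega.
  - intros y Hy. apply M0, DxR_gs, Hy.
  - destruct (Nat.lt_ge_cases j 3).
    + apply partial_mu_gs_M; auto.
    + apply partial_mu_gs_gamma; auto.
Qed.

Lemma partial_PiMu3 x j k l : Omega D x -> (j < 6)%nat ->
  partial_at (PiMu3 mu k l) j x (dPiAt (dmu_at x) x j k l).
Proof.
  intros Hx Hj. unfold partial_at, dPiAt.
  rewrite (PiAt_affine _ (unit_vec j)).
  eapply dlim_ext; [intros t; symmetry; apply (PiAt_affine (mu (gs (upd x j t))) (upd x j t))
                   |reflexivity|].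
  apply dlim_plus.
  - apply dlim_sumR. intros a Ha.
    eapply dlim_val; [|apply dlim_mult; [apply derivable_pt_lim_const|apply partial_coord]].
    cbv beta. ring.
  - eapply dlim_val;
      [|apply dlim_mult; [apply derivable_pt_lim_const|apply (partial_mu_gs x j Hx Hj)]].
    cbv beta. ring.
Qed.

Definition dbracket (G H : list nat -> pt -> R) x j :=
  sumR 6 (fun k => sumR 6 (fun l =>
      G (cons j (cons k nil)) x * PiMu3 mu k l x * H (cons l nil) x
    + G (cons k nil) x * dPiAt (dmu_at x) x j k l * H (cons l nil) x
    + G (cons k nil) x * PiMu3 mu k l x * H (cons j (cons l nil)) x)).

Lemma partial_pbracket g G h H x j :
  deriv_family 6 (Omega D) g G -> deriv_family 6 (Omega D) h H -> Omega D x -> (j < 6)%nat ->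
  partial_at (pbracket 6 (PiMu3 mu) g h) j x (dbracket G H x j).
Proof.
  intros Hg Hh Hx Hj. pose proof (open_Omega D D_open) as HU.
  apply (partial_local 6 (Omega D) (fun y => sumR 6 (fun k => sumR 6 (fun l =>
          G (cons k nil) y * PiMu3 mu k l y * H (cons l nil) y)))); auto.
  { intros y Hy. unfold pbracket. apply sumR_ext. intros k Hk. apply sumR_ext. intros l Hl.
    rewrite (pd_family 6 (Omega D) g G k y), (pd_family 6 (Omega D) h H l y); auto. }
  unfold partial_at, dbracket.
  eapply dlim_val; [|apply (dlim_sumR2_mult3 6 (fun k l t => G (cons k nil) (upd x j t))
    (fun k l t => PiMu3 mu k l (upd x j t)) (fun k l t => H (cons l nil) (upd x j t)))].
  - rewrite upd_same. reflexivity.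
  - destruct Hg as (_ & _ & DG). destruct Hh as (_ & _ & DH).
    intros k l Hk Hl. repeat split.
    + apply DG; auto.
    + apply partial_PiMu3; auto.
    + apply DH; auto.
Qed.

Lemma pbracket_pbracket_expand f F g G h H x :
  deriv_family 6 (Omega D) f F -> deriv_family 6 (Omega D) g G ->
  deriv_family 6 (Omega D) h H -> Omega D x ->
  pbracket 6 (PiMu3 mu) f (pbracket 6 (PiMu3 mu) g h) x =
    jac_hess_g (mu (gs x)) x (fun i => F (cons i nil) x) (fun i => H (cons i nil) x)
      (fun a b => G (cons a (cons b nil)) x)
  + jac_dPi (mu (gs x)) (dmu_at x) x
      (fun i => F (cons i nil) x) (fun i => G (cons i nil) x) (fun i => H (cons i nil) x)
  + jac_hess_h (mu (gs x)) x (fun i => F (cons i nil) x) (fun i => G (cons i nil) x)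
      (fun a b => H (cons a (cons b nil)) x).
Proof.
  intros Hf Hg Hh Hx. pose proof (open_Omega D D_open) as HU.
  unfold jac_hess_g, jac_dPi, jac_hess_h. etransitivity; [|apply sumR2_plus3].
  unfold pbracket at 1. apply sumR_ext. intros i Hi. apply sumR_ext. intros j Hj.
  rewrite (pd_family 6 (Omega D) f F i x) by auto.
  rewrite (pd_unique _ _ _ _ (partial_pbracket g G h H x j Hg Hh Hx Hj)).
  rewrite <- !Rmult_plus_distr_l. f_equal.
  etransitivity; [|apply sumR2_plus3]. unfold dbracket.
  apply sumR_ext. intros k Hk. apply sumR_ext. intros l Hl.
  unfold symm_upper. destruct (Nat.leb j k), (Nat.leb j l); cbv beta;
    rewrite ?(deriv_family_schwarz 6 (Omega D) g G x j k),
      ?(deriv_family_schwarz 6 (Omega D) h H x j l);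
    auto.
Qed.

(* The derivative of f along rotations of gamma about the gamma3-axis. *)
Definition rot3 (f : pt -> R) (p : pt) : R := p 0%nat * pd f 1 p - p 1%nat * pd f 0 p.

Lemma jacobiator_formula f g h x :
  smooth_on 6 (Omega D) f -> smooth_on 6 (Omega D) g -> smooth_on 6 (Omega D) h -> Omega D x ->
  pbracket 6 (PiMu3 mu) f (pbracket 6 (PiMu3 mu) g h) x
  + pbracket 6 (PiMu3 mu) g (pbracket 6 (PiMu3 mu) h f) x
  + pbracket 6 (PiMu3 mu) h (pbracket 6 (PiMu3 mu) f g) x =
  - rot3 mu (gs x) * det3 (fun i => pd f i x) (fun i => pd g i x) (fun i => pd h i x).
Proof.
  intros [F Hf] [G Hg] [H Hh] Hx. pose proof (open_Omega D D_open) as HU.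
  rewrite (pbracket_pbracket_expand f F g G h H x), (pbracket_pbracket_expand g G h H f F x),
    (pbracket_pbracket_expand h H f F g G x) by auto.
  set (f1 := fun i => F (cons i nil) x). set (g1 := fun i => G (cons i nil) x).
  set (h1 := fun i => H (cons i nil) x).
  pose proof (jac_hess_cancel (mu (gs x)) x f1 h1 (fun a b => G (cons a (cons b nil)) x)).
  pose proof (jac_hess_cancel (mu (gs x)) x g1 f1 (fun a b => H (cons a (cons b nil)) x)).
  pose proof (jac_hess_cancel (mu (gs x)) x h1 g1 (fun a b => F (cons a (cons b nil)) x)).
  pose proof (jac_dPi_cyclic (mu (gs x)) (dmu_at x) x f1 g1 h1).
  replace (det3 (fun i => pd f i x) (fun i => pd g i x) (fun i => pd h i x)) with (det3 f1 g1 h1).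
  2: { unfold det3, f1, g1, h1. rewrite !(pd_family 6 (Omega D) f F), !(pd_family 6 (Omega D) g G),
         !(pd_family 6 (Omega D) h H) by (auto; lia). reflexivity. }
  unfold rot3, dmu_at in *. pose proof (DxR_gs D x Hx).
  rewrite !(pd_family 4 (DxR D) mu MF) by (auto using open_DxR; lia).
  simpl. lra.
Qed.

Lemma Poisson_of_rot3 :
  (forall p, DxR D p -> rot3 mu p = 0) -> defines_Poisson 6 (Omega D) (PiMu3 mu).
Proof.
  intros Hrot f g h Hf Hg Hh x Hx.
  rewrite jacobiator_formula by auto. rewrite Hrot by (apply DxR_gs, Hx). ring.
Qed.

Lemma rot3_dist0 p q : DxR D p -> DxR D q -> distn 4 p q = 0 -> rot3 mu q = rot3 mu p.
Proof.
  destruct mu_family as (_ & MC & _). intros Hp Hq Hd.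
  assert (E : forall a, (a < 4)%nat -> q a = p a).
  { intros a Ha. pose proof (distn_coord 4 p q a Ha).
    destruct (Req_dec (p a - q a) 0) as [Z|Z]; [lra|]. apply Rabs_pos_lt in Z. lra. }
  unfold rot3. rewrite !(pd_family 4 (DxR D) mu MF) by (auto using open_DxR; lia).
  rewrite (cont_on_dist0 4 (DxR D) (MF (cons 1%nat nil)) p q),
    (cont_on_dist0 4 (DxR D) (MF (cons 0%nat nil)) p q), !E by (auto; lia).
  reflexivity.
Qed.

Lemma rot3_of_Poisson :
  (forall q, D q -> ~ (q 0%nat = 0 /\ q 1%nat = 0 /\ q 2%nat = 0)) ->
  defines_Poisson 6 (Omega D) (PiMu3 mu) -> forall p, DxR D p -> rot3 mu p = 0.
Proof.
  intros Hnz HP p Hp.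
  pose proof (gamma_norm2_pos D p Hnz Hp) as Hn.
  set (x := lift p). assert (Hx : Omega D x) by apply Omega_lift, Hp.
  assert (Hcoord : forall a, (a < 6)%nat -> smooth_on 6 (Omega D) (fun y => y a))
    by (intros; apply smooth_gen_smooth; constructor; auto).
  pose proof (HP _ _ _ (Hcoord 0%nat ltac:(lia)) (Hcoord 1%nat ltac:(lia)) (Hcoord 2%nat ltac:(lia))
    x Hx) as J.
  rewrite jacobiator_formula in J by (auto; apply Hcoord; lia).
  unfold det3 in J. rewrite !pd_coord in J. unfold unit_vec in J. simpl in J.
  rewrite <- (rot3_dist0 (gs x) p) in J
    by first [apply DxR_gs, Hx | exact Hp | apply distn_gs_lift, Hn].
  lra.
Qed.
End Jacobiator.

Lemma Poisson_iff_rot3 D mu : is_open 3 D ->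
  (forall q, D q -> ~ (q 0%nat = 0 /\ q 1%nat = 0 /\ q 2%nat = 0)) -> smooth_on 4 (DxR D) mu ->
  defines_Poisson 6 (Omega D) (PiMu3 mu) <-> forall p, DxR D p -> rot3 mu p = 0.
Proof.
  intros HD Hnz [MF Hmu]. split.
  - eapply rot3_of_Poisson; eauto.
  - eapply Poisson_of_rot3; eauto.
Qed.

Lemma smooth_product D beta delta : smooth1 beta -> smooth1 delta ->
  smooth_on 4 (DxR D) (fun p => beta (p 2%nat) * delta (p 3%nat)).
Proof.
  intros Hb Hd. apply smooth_gen_smooth.
  apply smooth_gen_mult; apply smooth_gen_comp; auto; apply smooth_gen_coord; lia.
Qed.

Lemma rot3_product beta delta p : rot3 (fun q => beta (q 2%nat) * delta (q 3%nat)) p = 0.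
Proof.
  unfold rot3. rewrite !(pd_unique _ _ _ 0); [ring| |];
    unfold partial_at, upd; simpl; apply derivable_pt_lim_const.
Qed.

Lemma pd_casimir Delta B delta beta x j :
  (forall s, derivable_pt_lim Delta s (/ delta s)) -> (forall s, derivable_pt_lim B s (beta s)) ->
  pd (fun y => Delta (Mdotg y) + B (y 5%nat)) j x =
  / delta (Mdotg x) * (unit_vec j 0%nat * x 3%nat + x 0%nat * unit_vec j 3%nat
    + (unit_vec j 1%nat * x 4%nat + x 1%nat * unit_vec j 4%nat)
    + (unit_vec j 2%nat * x 5%nat + x 2%nat * unit_vec j 5%nat))
  + beta (x 5%nat) * unit_vec j 5%nat.
Proof.
  intros DDelta DB. apply pd_unique. unfold partial_at.
  assert (DM : derivable_pt_lim (fun t => Mdotg (upd x j t)) (x j)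
    (unit_vec j 0%nat * upd x j (x j) 3%nat + upd x j (x j) 0%nat * unit_vec j 3%nat
     + (unit_vec j 1%nat * upd x j (x j) 4%nat + upd x j (x j) 1%nat * unit_vec j 4%nat)
     + (unit_vec j 2%nat * upd x j (x j) 5%nat + upd x j (x j) 2%nat * unit_vec j 5%nat))).
  { unfold Mdotg. apply dlim_plus; [apply dlim_plus|]; apply dlim_mult; apply partial_coord. }
  eapply dlim_val; [|apply dlim_plus;
    [exact (dlim_comp _ Delta _ _ _ DM (DDelta _))
    |exact (dlim_comp _ B _ _ _ (partial_coord x j 5%nat) (DB _))]].
  rewrite !upd_same. unfold Mdotg. ring.
Qed.

Lemma Casimir_product D beta delta Delta B :
  smooth1 beta -> smooth1 delta -> (forall s, delta s <> 0) ->
  (forall s, derivable_pt_lim Delta s (/ delta s)) -> (forall s, derivable_pt_lim B s (beta s)) ->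
  is_Casimir 6 (Omega D) (PiMu3 (fun p => beta (p 2%nat) * delta (p 3%nat)))
    (fun x => Delta (Mdotg x) + B (x 5%nat)).
Proof.
  intros Hb Hd Hdnz DDelta DB. split.
  - assert (SDelta : smooth1 Delta) 
      by (apply (smooth1_antider (fun s => / delta s)); [apply smooth1_inv|]; assumption).
    assert (SB : smooth1 B) by (apply (smooth1_antider beta); assumption).
    apply smooth_gen_smooth, smooth_gen_plus; apply smooth_gen_comp; try assumption.
    + unfold Mdotg. repeat (apply smooth_gen_plus || apply smooth_gen_mult);
        apply smooth_gen_coord; lia.
    + apply smooth_gen_coord; lia.
  - intros x _ i Hi. cbn [sumR]. rewrite !(pd_casimir Delta B delta beta) by assumption.
    unfold PiMu3, PiMu, unit_vec, gs, Mdotg.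
    destruct i as [|[|[|[|[|[|i]]]]]]; try lia; simpl; field; apply Hdnz.
Qed.

Theorem mainTheorem12 :
  forall D : pt -> Prop,
    is_open 3 D ->
    (forall p, D p -> ~ (p 0%nat = 0 /\ p 1%nat = 0 /\ p 2%nat = 0)) ->
    (forall mu3 : pt -> R, smooth_on 4 (DxR D) mu3 ->
       (defines_Poisson 6 (Omega D) (PiMu3 mu3) <->
        forall p, DxR D p -> p 0%nat * pd mu3 1 p - p 1%nat * pd mu3 0 p = 0))
    /\
    (forall beta delta Delta B : R -> R,
       smooth1 beta -> smooth1 delta -> (forall s, delta s <> 0) ->
       (forall s, derivable_pt_lim Delta s (/ delta s)) ->
       (forall s, derivable_pt_lim B s (beta s)) ->
       let mu3 := fun p : pt => beta (p 2%nat) * delta (p 3%nat) in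
       defines_Poisson 6 (Omega D) (PiMu3 mu3) /\
       is_Casimir 6 (Omega D) (PiMu3 mu3) (fun x => Delta (Mdotg x) + B (x 5%nat))).
Proof.
  intros D HD Hnz. split.
  - intros mu Hmu. exact (Poisson_iff_rot3 D mu HD Hnz Hmu).
  - intros beta delta Delta B Hb Hd Hdnz DDelta DB mu3. split.
    + apply (Poisson_iff_rot3 D mu3 HD Hnz (smooth_product D beta delta Hb Hd)).
      intros p _. apply rot3_product.
    + apply Casimir_product; assumption.
Qed.
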